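(* For all $0<x<\pi/2$, \[ \frac{P(x)}{(\pi^2-4x^2)^2}<x\sec^2x-\tan x<\frac{Q(x)}{(\pi^2-4x^2)^2}, \] where \[ P(x)=\frac{2\pi^4}{3}x^3+\frac{8\pi^2(\pi^2-10)}{15}x^5+\frac{2(322560+1680\pi^4-672\pi^6+17\pi^8)}{315\pi^4}x^7+\frac{16(168-17\pi^2)}{315}x^9+\frac{32(17\pi^8-161280)}{315\pi^8}x^{11} \] and \[ Q(x)=\frac{2\pi^4}{3}x^3+\frac{32(156-6\pi^2-\pi^4)}{3\pi^2}x^5+\frac{64(-657+37\pi^2+3\pi^4)}{3\pi^4}x^7+\frac{512(285-19\pi^2-\pi^4)}{3\pi^6}x^9+\frac{512(-354+26\pi^2+\pi^4)}{3\pi^8}x^{11}. \] *)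

From Stdlib Require Import Reals Lra.
Open Scope R_scope.

Definition P_low (x : R) : R :=
  2 * PI ^ 4 / 3 * x ^ 3
  + 8 * PI ^ 2 * (PI ^ 2 - 10) / 15 * x ^ 5
  + 2 * (322560 + 1680 * PI ^ 4 - 672 * PI ^ 6 + 17 * PI ^ 8) / (315 * PI ^ 4) * x ^ 7
  + 16 * (168 - 17 * PI ^ 2) / 315 * x ^ 9
  + 32 * (17 * PI ^ 8 - 161280) / (315 * PI ^ 8) * x ^ 11.

Definition Q_up (x : R) : R :=
  2 * PI ^ 4 / 3 * x ^ 3
  + 32 * (156 - 6 * PI ^ 2 - PI ^ 4) / (3 * PI ^ 2) * x ^ 5
  + 64 * (-657 + 37 * PI ^ 2 + 3 * PI ^ 4) / (3 * PI ^ 4) * x ^ 7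
  + 512 * (285 - 19 * PI ^ 2 - PI ^ 4) / (3 * PI ^ 6) * x ^ 9
  + 512 * (-354 + 26 * PI ^ 2 + PI ^ 4) / (3 * PI ^ 8) * x ^ 11.

Definition sec2 (x : R) : R := 1 / (cos x) ^ 2.

From Stdlib Require Import Reals Lra List Factorial Rtrigo_facts.
Import ListNotations.
Open Scope R_scope.

(* Since [x sec^2 x - tan x = (2x - sin 2x) / (1 + cos 2x)], the claim is
   [P (1 + cos 2x) < (PI^2 - 4x^2)^2 (2x - sin 2x) < Q (1 + cos 2x)].  As [P] and
   [Q] are nonnegative, it suffices to replace [sin] and [cos] by Taylor
   polynomials bounding them on the appropriate side: at [2x] when
   [x <= PI/4], and at [PI - 2x] (via [sin 2x = sin (PI - 2x)],
   [cos 2x = - cos (PI - 2x)]) when [x >= PI/4].  After rescaling the Taylor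
   variable to [t] in [(0, 1]], each resulting polynomial inequality, like the
   nonnegativity of [P] and [Q], reads: a power of [t] times a polynomial
   whose Bernstein coefficients on [[0, 1]] are nonnegative polynomials in
   [PI], the last one positive.  These signs follow from a 13-digit
   enclosure of [PI]. *)

(* [bernstein [c_0; ...; c_n] t = sum_k c_k t^k (1 - t)^(n - k)], in Horner
   form; the binomial coefficients are absorbed into the [c_k]. *)
Fixpoint bernstein (c : list R) (t : R) : R :=
  match c with
  | [] => 0
  | c0 :: cs => c0 * (1 - t) ^ length cs + t * bernstein cs t
  end.

Lemma bernstein_pos (c : list R) (t : R) :
  Forall (Rle 0) c -> 0 < last c 0 -> 0 < t <= 1 -> 0 < bernstein c t.
Proof.
  intros Hc Hlast Ht; induction Hc as [|c0 cs Hc0 Hcs IH]; [simpl in Hlast; lra|].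
  destruct cs as [|c1 cs]; [simpl in *; lra|].
  change (0 < c0 * (1 - t) ^ length (c1 :: cs) + t * bernstein (c1 :: cs) t).
  assert (0 <= c0 * (1 - t) ^ length (c1 :: cs))
    by (apply Rmult_le_pos; [|apply pow_le]; lra).
  assert (0 < t * bernstein (c1 :: cs) t)
    by (apply Rmult_lt_0_compat; [lra|apply IH; exact Hlast]).
  lra.
Qed.

Lemma Rdiv_in_unit_interval (x a : R) : 0 < x <= a -> 0 < x / a <= 1.
Proof.
  intros Hx; split; [apply Rdiv_lt_0_compat; lra|].
  replace 1 with (a / a) by (field; lra).
  apply Rmult_le_compat_r; [left; apply Rinv_0_lt_compat|]; lra.
Qed.

Lemma Rmult_lt_compat_bounds (a b x x' y y' : R) :
  0 <= a -> 0 <= b -> x <= x' -> y' <= y -> a * x' < b * y' -> a * x < b * y.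
Proof.
  intros Ha Hb Hx Hy H.
  apply Rle_lt_trans with (a * x'); [apply Rmult_le_compat_l; assumption|].
  apply Rlt_le_trans with (b * y'); [assumption|apply Rmult_le_compat_l; assumption].
Qed.

Lemma Rdiv_lt_Rdiv (a b c d : R) : 0 < b -> 0 < d -> a * d < b * c -> a / b < c / d.
Proof.
  intros Hb Hd H; apply Rlt_0_minus.
  replace (c / d - a / b) with ((b * c - a * d) / (b * d)) by (field; lra).
  apply Rdiv_lt_0_compat; [lra|apply Rmult_lt_0_compat; assumption].
Qed.

Lemma PI_neq0 : PI <> 0.
Proof. pose proof PI_RGT_0; lra. Qed.

Lemma PI_enclosure : 3.1415926535897 <= PI <= 3.1415926535898.
Proof.
  destruct (PI_2_3_7_ineq 8) as [Hlo Hhi].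
  unfold tg_alt, PI_2_3_7_tg, Ratan_seq in *; cbn [sum_f_R0 Nat.mul Nat.add] in *.
  rewrite !INR_IZR_INZ in *; cbn [Z.of_nat Pos.of_succ_nat Pos.succ pow] in *.
  split; lra.
Qed.

Lemma PI_pow_enclosure (n : nat) : 3.1415926535897 ^ n <= PI ^ n <= 3.1415926535898 ^ n.
Proof. pose proof PI_enclosure; split; apply pow_incr; lra. Qed.

(* Rounded outward to 16 digits, so that [lra] works with small rationals. *)
Lemma PI_odd_pow_bounds :
  31.00627668029705 <= PI ^ 3 <= 31.00627668030003 /\
  306.0196847852360 <= PI ^ 5 <= 306.0196847852848 /\
  3020.293227776164 <= PI ^ 7 <= 3020.293227776838 /\
  29809.09933343824 <= PI ^ 9 <= 29809.09933344679 /\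
  294204.0179737945 <= PI ^ 11 <= 294204.0179738976 /\
  2903677.270612163 <= PI ^ 13 <= 2903677.270613365 /\
  28658145.96937524 <= PI ^ 15 <= 28658145.96938893 /\
  282844563.5863903 <= PI ^ 17 <= 282844563.5865435 /\
  2791563949.596271 <= PI ^ 19 <= 2791563949.597960 /\
  27551631842.85611 <= PI ^ 21 <= 27551631842.87454 /\
  271923706893.4303 <= PI ^ 23 <= 271923706893.6294.
Proof.
  repeat split;
    match goal with |- context [PI ^ ?n] => pose proof (PI_pow_enclosure n); lra end.
Qed.

Ltac PI_poly_sign :=
  pose proof PI_odd_pow_bounds;
  repeat match goal with H : _ /\ _ |- _ => destruct H end;
  lra.

Ltac bernstein_certificate :=
  apply bernstein_pos; [repeat constructor; PI_poly_sign | simpl; PI_poly_sign |].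

Definition sin_taylor13 (u : R) : R :=
  u - u^3/6 + u^5/120 - u^7/5040 + u^9/362880 - u^11/39916800 + u^13/6227020800.
Definition sin_taylor11 (u : R) : R :=
  u - u^3/6 + u^5/120 - u^7/5040 + u^9/362880 - u^11/39916800.
Definition cos_taylor12 (u : R) : R :=
  1 - u^2/2 + u^4/24 - u^6/720 + u^8/40320 - u^10/3628800 + u^12/479001600.
Definition cos_taylor10 (u : R) : R :=
  1 - u^2/2 + u^4/24 - u^6/720 + u^8/40320 - u^10/3628800.

Ltac taylor_approx_eq :=
  unfold sin_approx, cos_approx, sin_term, cos_term;
  cbn [sum_f_R0 Nat.mul Nat.add];
  repeat rewrite fact_simpl, mult_INR; cbn [fact INR];
  unfold sin_taylor13, sin_taylor11, cos_taylor12, cos_taylor10; field.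

Lemma sin_le_taylor13 (u : R) : 0 <= u <= PI -> sin u <= sin_taylor13 u.
Proof.
  intros Hu; replace (sin_taylor13 u) with (sin_approx u (2 * (2 + 1))) by taylor_approx_eq.
  apply sin_bound; lra.
Qed.

Lemma sin_ge_taylor11 (u : R) : 0 <= u <= PI -> sin_taylor11 u <= sin u.
Proof.
  intros Hu; replace (sin_taylor11 u) with (sin_approx u (2 * 2 + 1)) by taylor_approx_eq.
  apply sin_bound; lra.
Qed.

Lemma cos_le_taylor12 (u : R) : - PI / 2 <= u <= PI / 2 -> cos u <= cos_taylor12 u.
Proof.
  intros Hu; replace (cos_taylor12 u) with (cos_approx u (2 * (2 + 1))) by taylor_approx_eq.
  apply cos_bound; lra.
Qed.

Lemma cos_ge_taylor10 (u : R) : - PI / 2 <= u <= PI / 2 -> cos_taylor10 u <= cos u.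
Proof.
  intros Hu; replace (cos_taylor10 u) with (cos_approx u (2 * 2 + 1)) by taylor_approx_eq.
  apply cos_bound; lra.
Qed.

Definition P_low_coeffs : list R :=
  [ (1/12) * PI^7;
    (2/3) * PI^7;
    (13/6) * PI^7 + (1/60) * PI^9;
    (11/3) * PI^7 + (1/10) * PI^9;
    (16) * PI^3 + (41/12) * PI^7 + (13/60) * PI^9 + (17/20160) * PI^11;
    (64) * PI^3 + (5/3) * PI^7 + (1/5) * PI^9 + (17/5040) * PI^11;
    (96) * PI^3 + (1/3) * PI^7 + (1/15) * PI^9 + (17/5040) * PI^11;
    (64) * PI^3;
    (8) * PI^3 ].

Lemma P_low_bernstein (x : R) :
  P_low x = (2 * x / PI) ^ 3 * bernstein P_low_coeffs (2 * x / PI).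
Proof. unfold P_low, P_low_coeffs; cbn [bernstein length]; field; exact PI_neq0. Qed.

Lemma P_low_nonneg (x : R) : 0 < x <= PI / 2 -> 0 <= P_low x.
Proof.
  intros Hx; pose proof PI_RGT_0.
  assert (Ht : 0 < 2 * x / PI <= 1) by (apply Rdiv_in_unit_interval; lra).
  rewrite P_low_bernstein; left.
  apply Rmult_lt_0_compat; [apply pow_lt; lra|bernstein_certificate; exact Ht].
Qed.

Definition Q_up_coeffs : list R :=
  [ (1/12) * PI^7;
    (2/3) * PI^7;
    (52) * PI^3 + (-2) * PI^5 + (2) * PI^7;
    (312) * PI^3 + (-12) * PI^5 + (8/3) * PI^7;
    (1341/2) * PI^3 + (-143/6) * PI^5 + (4/3) * PI^7;
    (602) * PI^3 + (-46/3) * PI^5;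
    (218) * PI^3 + (2/3) * PI^5;
    (64) * PI^3;
    (8) * PI^3 ].

Lemma Q_up_bernstein (x : R) :
  Q_up x = (2 * x / PI) ^ 3 * bernstein Q_up_coeffs (2 * x / PI).
Proof. unfold Q_up, Q_up_coeffs; cbn [bernstein length]; field; exact PI_neq0. Qed.

Lemma Q_up_nonneg (x : R) : 0 < x <= PI / 2 -> 0 <= Q_up x.
Proof.
  intros Hx; pose proof PI_RGT_0.
  assert (Ht : 0 < 2 * x / PI <= 1) by (apply Rdiv_in_unit_interval; lra).
  rewrite Q_up_bernstein; left.
  apply Rmult_lt_0_compat; [apply pow_lt; lra|bernstein_certificate; exact Ht].
Qed.

Definition P_low_gap_coeffs_near_0 : list R :=
  [ (-1/4) * PI^3 + (17/645120) * PI^11;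
    (-4) * PI^3 + (17/40320) * PI^11;
    (-30) * PI^3 + (1/64) * PI^5 + (4063/1290240) * PI^11 + (-29/92897280) * PI^13;
    (-140) * PI^3 + (7/32) * PI^5 + (1343/92160) * PI^11 + (-29/6635520) * PI^13;
    (-58239/128) * PI^3 + (91/64) * PI^5 + (-1/3072) * PI^7 + (482681/10321920) * PI^11 + (-5249/185794560) * PI^13 + (-1/145981440) * PI^15;
    (-34941/32) * PI^3 + (91/16) * PI^5 + (-1/256) * PI^7 + (284699/2580480) * PI^11 + (-5191/46448640) * PI^13 + (-1/12165120) * PI^15;
    (-128095/64) * PI^3 + (32031/2048) * PI^5 + (-11/512) * PI^7 + (1/368640) * PI^9 + (113509/573440) * PI^11 + (-49909/165150720) * PI^13 + (-131/291962880) * PI^15 + (4861/51011754393600) * PI^17;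
    (-91465/32) * PI^3 + (32027/1024) * PI^5 + (-55/768) * PI^7 + (1/36864) * PI^9 + (33847/122880) * PI^11 + (-20909/35389440) * PI^13 + (-43/29196288) * PI^15 + (4861/5101175439360) * PI^17;
    (-411345/128) * PI^3 + (96051/2048) * PI^5 + (-15839/98304) * PI^7 + (1/8192) * PI^9 + (4961035/16515072) * PI^11 + (-426619/495452160) * PI^13 + (-7561/2335703040) * PI^15 + (432629/102023508787200) * PI^17 + (-6637/13184576520192000) * PI^19;
    (-45661/16) * PI^3 + (13713/256) * PI^5 + (-3167/12288) * PI^7 + (1/3072) * PI^9 + (2658391/10321920) * PI^11 + (-58841/61931520) * PI^13 + (-293/58392576) * PI^15 + (140969/12752938598400) * PI^17 + (-6637/1648072065024000) * PI^19;
    (-63833/32) * PI^3 + (47943/1024) * PI^5 + (-7385/24576) * PI^7 + (6719/11796480) * PI^9 + (34009/196608) * PI^11 + (-23702279/29727129600) * PI^13 + (-3283/583925760) * PI^15 + (15248957/816188070297600) * PI^17 + (-6637/479439146188800) * PI^19 + (53/35158870720512000) * PI^21;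
    (-17373/16) * PI^3 + (15953/512) * PI^5 + (-3161/12288) * PI^7 + (1343/1966080) * PI^9 + (929281/10321920) * PI^11 + (-7524917/14863564800) * PI^13 + (-1339/291962880) * PI^15 + (1745099/81618807029760) * PI^17 + (-351761/13184576520192000) * PI^19 + (53/5859811786752000) * PI^21;
    (-57745/128) * PI^3 + (15911/1024) * PI^5 + (-7885/49152) * PI^7 + (149/262144) * PI^9 + (18806285/528482304) * PI^11 + (-1422853/5945425920) * PI^13 + (-42403201/15695924428800) * PI^15 + (2736743/163237614059520) * PI^17 + (-86281/2739652263936000) * PI^19 + (1537/70317741441024000) * PI^21 + (-17/5062877383753728000) * PI^23;
    (-4425/32) * PI^3 + (1441/256) * PI^5 + (-291/4096) * PI^7 + (191/589824) * PI^9 + (6819137/660602880) * PI^11 + (-8089/99090432) * PI^13 + (-4394881/3923981107200) * PI^15 + (1813153/204047017574400) * PI^17 + (-245569/10547661216153600) * PI^19 + (53/1953270595584000) * PI^21 + (-17/1265719345938432000) * PI^23;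
    (-1887/64) * PI^3 + (2867/2048) * PI^5 + (-521/24576) * PI^7 + (95/786432) * PI^9 + (304107/146800640) * PI^11 + (-2006489/105696460800) * PI^13 + (-810881/2615987404800) * PI^15 + (354853/116598295756800) * PI^17 + (-1108379/105476612161536000) * PI^19 + (10229/562541931528192000) * PI^21 + (-17/920523160682496000) * PI^23;
    (-125/32) * PI^3 + (219/1024) * PI^5 + (-47/12288) * PI^7 + (157/5898240) * PI^9 + (11311/44040192) * PI^11 + (-36587/13589544960) * PI^13 + (-201601/3923981107200) * PI^15 + (82637/136031345049600) * PI^17 + (-6637/2511347908608000) * PI^19 + (53/8523362598912000) * PI^21 + (-17/1687625794584576000) * PI^23;
    (-31/128) * PI^3 + (31/2048) * PI^5 + (-31/98304) * PI^7 + (31/11796480) * PI^9 + (5591/377487360) * PI^11 + (-167009/951268147200) * PI^13 + (-1935391/502269581721600) * PI^15 + (4861/90687563366400) * PI^17 + (-6637/23439247147008000) * PI^19 + (53/62504659058688000) * PI^21 + (-17/9000670904451072000) * PI^23 ].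

Lemma P_low_taylor_gap_near_0 (x : R) :
  (PI ^ 2 - 4 * x ^ 2) ^ 2 * (2 * x - sin_taylor13 (2 * x))
    - P_low x * (1 + cos_taylor12 (2 * x))
  = (4 * x / PI) ^ 7 * bernstein P_low_gap_coeffs_near_0 (4 * x / PI).
Proof.
  unfold P_low, sin_taylor13, cos_taylor12, P_low_gap_coeffs_near_0.
  cbn [bernstein length]; field; exact PI_neq0.
Qed.

Definition Q_up_gap_coeffs_near_0 : list R :=
  [ (13/4) * PI^3 + (-1/8) * PI^5 + (-1/96) * PI^7 + (-1/960) * PI^9;
    (52) * PI^3 + (-2) * PI^5 + (-1/6) * PI^7 + (-1/60) * PI^9;
    (49701/128) * PI^3 + (-5801/384) * PI^5 + (-949/768) * PI^7 + (-317/2560) * PI^9 + (11/430080) * PI^11;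
    (114947/64) * PI^3 + (-13727/192) * PI^5 + (-721/128) * PI^7 + (-2177/3840) * PI^9 + (11/30720) * PI^11;
    (1474477/256) * PI^3 + (-1456951/6144) * PI^5 + (-108491/6144) * PI^7 + (-109967/61440) * PI^9 + (2969/1290240) * PI^11 + (-41/185794560) * PI^13;
    (868971/64) * PI^3 + (-896837/1536) * PI^5 + (-61937/1536) * PI^7 + (-21151/5120) * PI^9 + (967/107520) * PI^11 + (-41/15482880) * PI^13;
    (49843845/2048) * PI^3 + (-4515733/4096) * PI^5 + (-6810907/98304) * PI^7 + (-10632083/1474560) * PI^9 + (24643/1032192) * PI^11 + (-5329/371589120) * PI^13 + (163/163499212800) * PI^15;
    (34648121/1024) * PI^3 + (-3329809/2048) * PI^5 + (-1493869/16384) * PI^7 + (-7157887/737280) * PI^9 + (16781/368640) * PI^11 + (-1721/37158912) * PI^13 + (163/16349921280) * PI^15;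
    (75513753/2048) * PI^3 + (-61919837/32768) * PI^5 + (-6069171/65536) * PI^7 + (-120248789/11796480) * PI^9 + (995153/15482880) * PI^11 + (-295109/2972712960) * PI^13 + (7171/163499212800) * PI^15 + (-1/356725555200) * PI^17;
    (8089219/256) * PI^3 + (-7101869/4096) * PI^5 + (-1782469/24576) * PI^7 + (-12352517/1474560) * PI^9 + (132107/1935360) * PI^11 + (-55253/371589120) * PI^13 + (2281/20437401600) * PI^15 + (-1/44590694400) * PI^17;
    (21734293/1024) * PI^3 + (-10240503/8192) * PI^5 + (-22742889/524288) * PI^7 + (-63388907/11796480) * PI^9 + (434304263/7927234560) * PI^11 + (-702491/4404019200) * PI^13 + (11881/65399685120) * PI^15 + (-1/13212057600) * PI^17;
    (5661363/512) * PI^3 + (-8599981/12288) * PI^5 + (-15261937/786432) * PI^7 + (-3143125/1179648) * PI^9 + (131084053/3963617280) * PI^11 + (-7339211/59454259200) * PI^13 + (32279/163499212800) * PI^15 + (-1/7134511104) * PI^17;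
    (4485113/1024) * PI^3 + (-14646893/49152) * PI^5 + (-3278839/524288) * PI^7 + (-63058919/62914560) * PI^9 + (46873319/3170893824) * PI^11 + (-65055001/951268147200) * PI^13 + (4551373/31391848857600) * PI^15 + (-443/2853804441600) * PI^17;
    (326503/256) * PI^3 + (-1145369/12288) * PI^5 + (-177373/131072) * PI^7 + (-13065941/47185920) * PI^9 + (3761867/792723456) * PI^11 + (-6290761/237817036800) * PI^13 + (557581/7847962214400) * PI^15 + (-1/9512681472) * PI^17;
    (527361/2048) * PI^3 + (-496175/24576) * PI^5 + (-264965/1572864) * PI^7 + (-5008759/94371840) * PI^9 + (131237647/126835752960) * PI^11 + (-1612979/237817036800) * PI^13 + (2793289/125567395430400) * PI^15 + (-1/23488102400) * PI^17;
    (32985/1024) * PI^3 + (-11079/4096) * PI^5 + (-5249/786432) * PI^7 + (-6625/1048576) * PI^9 + (580193/4227858432) * PI^11 + (-1759/1698693120) * PI^13 + (84179/20927899238400) * PI^15 + (-1/105696460800) * PI^17;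
    (3853/2048) * PI^3 + (-5533/32768) * PI^5 + (829/1572864) * PI^7 + (-13313/37748736) * PI^9 + (353389/42278584320) * PI^11 + (-1084213/15220290355200) * PI^13 + (17821/55807731302400) * PI^15 + (-1/1127428915200) * PI^17 ].

Lemma Q_up_taylor_gap_near_0 (x : R) :
  Q_up x * (1 + cos_taylor10 (2 * x))
    - (PI ^ 2 - 4 * x ^ 2) ^ 2 * (2 * x - sin_taylor11 (2 * x))
  = (4 * x / PI) ^ 5 * bernstein Q_up_gap_coeffs_near_0 (4 * x / PI).
Proof.
  unfold Q_up, sin_taylor11, cos_taylor10, Q_up_gap_coeffs_near_0.
  cbn [bernstein length]; field; exact PI_neq0.
Qed.

Definition P_low_gap_coeffs_near_pi2 : list R :=
  [ (61/4) * PI^3 + (1/12) * PI^5 + (-1/24) * PI^7 + (-1/120) * PI^9 + (-17/40320) * PI^11;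
    (423/2) * PI^3 + (11/8) * PI^5 + (-5/8) * PI^7 + (-7/60) * PI^9 + (-221/40320) * PI^11;
    (1375) * PI^3 + (497/48) * PI^5 + (-25339/5760) * PI^7 + (-2201/2880) * PI^9 + (-2377/71680) * PI^11 + (17/1935360) * PI^13;
    (11125/2) * PI^3 + (9211/192) * PI^5 + (-14819/768) * PI^7 + (-7165/2304) * PI^9 + (-31963/258048) * PI^11 + (187/1935360) * PI^13;
    (15673) * PI^3 + (14857/96) * PI^5 + (-1360841/23040) * PI^7 + (-5677243/645120) * PI^9 + (-353309/1105920) * PI^11 + (76021/154828800) * PI^13 + (-17/232243200) * PI^15;
    (130453/4) * PI^3 + (71359/192) * PI^5 + (-3084707/23040) * PI^7 + (-23701981/1290240) * PI^9 + (-1333187/2211840) * PI^11 + (94627/61931520) * PI^13 + (-17/25804800) * PI^15;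
    (3317797/64) * PI^3 + (16603/24) * PI^5 + (-2680703/11520) * PI^7 + (-25181179/860160) * PI^9 + (-399237829/464486400) * PI^11 + (74631/22937600) * PI^13 + (-10057/3715891200) * PI^15 + (17/52022476800) * PI^17;
    (8217847/128) * PI^3 + (24553/24) * PI^5 + (-3648959/11520) * PI^7 + (-62544079/1720320) * PI^9 + (-292163317/309657600) * PI^11 + (6214847/1238630400) * PI^13 + (-49919/7431782400) * PI^15 + (17/7431782400) * PI^17;
    (16023051/256) * PI^3 + (1248329/1024) * PI^5 + (-7876723/23040) * PI^7 + (-1148137/32256) * PI^9 + (-1493687513/1857945600) * PI^11 + (716239/123863040) * PI^13 + (-500737/44590694400) * PI^15 + (89791/12485394432000) * PI^17 + (-17/18728091648000) * PI^19;
    (24663649/512) * PI^3 + (2411487/2048) * PI^5 + (-339019/1152) * PI^7 + (-15830547/573440) * PI^9 + (-494000971/928972800) * PI^11 + (207029033/40874803200) * PI^13 + (-1190327/89181388800) * PI^15 + (15937/1189085184000) * PI^17 + (-17/3745618329600) * PI^19;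
    (116591/4) * PI^3 + (11316629/12288) * PI^5 + (-14900063/73728) * PI^7 + (-3122917/184320) * PI^9 + (-4490669/16588800) * PI^11 + (36999131/10899947520) * PI^13 + (-344713/29727129600) * PI^15 + (821467/49941577728000) * PI^17 + (-1003/99883155456000) * PI^19;
    (1753717/128) * PI^3 + (14227415/24576) * PI^5 + (-81199729/737280) * PI^7 + (-8433989/1032192) * PI^9 + (-1532939/14745600) * PI^11 + (31561099/18166579200) * PI^13 + (-190030271/25505877196800) * PI^15 + (199123/14269022208000) * PI^17 + (-221/17122826649600) * PI^19;
    (626063/128) * PI^3 + (885557/3072) * PI^5 + (-69414437/1474560) * PI^7 + (-252128069/82575360) * PI^9 + (-256247/8847360) * PI^11 + (109860073/163499212800) * PI^13 + (-16403753/4637432217600) * PI^15 + (238267/28538044416000) * PI^17 + (-1819/171228266496000) * PI^19;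
    (326291/256) * PI^3 + (909911/8192) * PI^5 + (-9120947/589824) * PI^7 + (-28523039/33030144) * PI^9 + (-10016119/1857945600) * PI^11 + (2095633/10899947520) * PI^13 + (-83281837/68015672524800) * PI^15 + (1406851/399532621824000) * PI^17 + (-221/38050725888000) * PI^19;
    (14421/64) * PI^3 + (392201/12288) * PI^5 + (-347863/92160) * PI^7 + (-58774427/330301440) * PI^9 + (-15628891/29727129600) * PI^11 + (2138077/54499737600) * PI^13 + (-5101879/17003918131200) * PI^15 + (39017/38050725888000) * PI^17 + (-289/136982613196800) * PI^19;
    (1469/64) * PI^3 + (158129/24576) * PI^5 + (-190535/294912) * PI^7 + (-3310165/132120576) * PI^9 + (95521/8493465600) * PI^11 + (175177/32699842560) * PI^13 + (-334759/6801567252480) * PI^15 + (313567/1598130487296000) * PI^17 + (-4709/9588782923776000) * PI^19;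
    (175/256) * PI^3 + (4985/6144) * PI^5 + (-34097/491520) * PI^7 + (-176371/82575360) * PI^9 + (1041323/118908518400) * PI^11 + (23641/54499737600) * PI^13 + (-2741/566797271040) * PI^15 + (211/9512681472000) * PI^17 + (-17/255700877967360) * PI^19;
    (-31/512) * PI^3 + (1183/24576) * PI^5 + (-10399/2949120) * PI^7 + (-54113/660602880) * PI^9 + (161249/237817036800) * PI^11 + (281/18166579200) * PI^13 + (-1621/7557296947200) * PI^15 + (199/177570054144000) * PI^17 + (-17/4261681299456000) * PI^19 ].

Lemma P_low_taylor_gap_near_pi2 (x : R) :
  (PI ^ 2 - 4 * x ^ 2) ^ 2 * (2 * x - sin_taylor13 (PI - 2 * x))
    - P_low x * (1 - cos_taylor10 (PI - 2 * x))
  = (PI - 2 * x) ^ 2 * (2 * (PI - 2 * x) / PI) ^ 2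
      * bernstein P_low_gap_coeffs_near_pi2 (2 * (PI - 2 * x) / PI).
Proof.
  unfold P_low, sin_taylor13, cos_taylor10, P_low_gap_coeffs_near_pi2.
  cbn [bernstein length]; field; exact PI_neq0.
Qed.

Definition Q_up_gap_coeffs_near_pi2 : list R :=
  [ (51/4) * PI^3 + (-31/24) * PI^5;
    (12013/64) * PI^3 + (-233/12) * PI^5 + (13/320) * PI^7;
    (166559/128) * PI^3 + (-52949/384) * PI^5 + (1769/2880) * PI^7;
    (1445409/256) * PI^3 + (-1888265/3072) * PI^5 + (199621/46080) * PI^7 + (-829/967680) * PI^9;
    (8801839/512) * PI^3 + (-11842639/6144) * PI^5 + (1745951/92160) * PI^7 + (-21121/1935360) * PI^9;
    (39964775/1024) * PI^3 + (-55490965/12288) * PI^5 + (7074997/122880) * PI^7 + (-47513/737280) * PI^9 + (1667/232243200) * PI^11;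
    (140331529/2048) * PI^3 + (-67121369/8192) * PI^5 + (95203157/737280) * PI^7 + (-201331/860160) * PI^9 + (17713/232243200) * PI^11;
    (390031383/4096) * PI^3 + (-578787499/49152) * PI^5 + (326469719/1474560) * PI^7 + (-16099039/27525120) * PI^9 + (1379963/3715891200) * PI^11 + (-197/6131220480) * PI^13;
    (870909549/8192) * PI^3 + (-445476447/32768) * PI^5 + (97182497/327680) * PI^7 + (-175936531/165150720) * PI^9 + (2718343/2477260800) * PI^11 + (-751/2724986880) * PI^13;
    (98520581/1024) * PI^3 + (-832941949/65536) * PI^5 + (1854221713/5898240) * PI^7 + (-1448008003/990904320) * PI^9 + (2610607/1189085184) * PI^11 + (-174173/163499212800) * PI^13 + (263/2942985830400) * PI^15;
    (580524641/8192) * PI^3 + (-1265002175/131072) * PI^5 + (3129800279/11796480) * PI^7 + (-3046926109/1981808640) * PI^9 + (186757237/59454259200) * PI^11 + (-4806763/1961990553600) * PI^13 + (1723/2942985830400) * PI^15;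
    (86954645/2048) * PI^3 + (-24343861/4096) * PI^5 + (4208459447/23592960) * PI^7 + (-550989317/440401920) * PI^9 + (56171257/16986931200) * PI^11 + (-19491359/5231974809600) * PI^13 + (2941/1743991603200) * PI^15 + (-1/5885971660800) * PI^17;
    (84289557/4096) * PI^3 + (-96623503/32768) * PI^5 + (1495022927/15728640) * PI^7 + (-2081188217/2642411520) * PI^9 + (123352781/47563407360) * PI^11 + (-123478907/31391848857600) * PI^13 + (7547/2690729902080) * PI^15 + (-1/1307993702400) * PI^17;
    (1020601/128) * PI^3 + (-114406691/98304) * PI^5 + (46808459/1179648) * PI^7 + (-2011108759/5284823040) * PI^9 + (144170273/95126814720) * PI^11 + (-184769617/62783697715200) * PI^13 + (559393/188351093145600) * PI^15 + (-23/15695924428800) * PI^17;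
    (9909287/4096) * PI^3 + (-70329839/196608) * PI^5 + (600015847/47185920) * PI^7 + (-1465263053/10569646080) * PI^9 + (124020503/190253629440) * PI^11 + (-195946591/125567395430400) * PI^13 + (260789/125567395430400) * PI^15 + (-73/47087773286400) * PI^17;
    (2274407/4096) * PI^3 + (-4064843/49152) * PI^5 + (23781953/7864320) * PI^7 + (-73079183/1981808640) * PI^9 + (381709591/1902536294400) * PI^11 + (-16038907/27903865651200) * PI^13 + (144559/150680874516480) * PI^15 + (-491/502269581721600) * PI^17;
    (744153/8192) * PI^3 + (-333073/24576) * PI^5 + (2639811/5242880) * PI^7 + (-107261471/15854469120) * PI^9 + (159267581/3805072588800) * PI^11 + (-70369877/502269581721600) * PI^13 + (85081/301361749032960) * PI^15 + (-41/111615462604800) * PI^17;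
    (4839/512) * PI^3 + (-276395/196608) * PI^5 + (619091/11796480) * PI^7 + (-578407/754974720) * PI^9 + (2524499/475634073600) * PI^11 + (-20438263/1004539163443200) * PI^13 + (6893/143505594777600) * PI^15 + (-17/223230925209600) * PI^17;
    (3853/8192) * PI^3 + (-27325/393216) * PI^5 + (121861/47185920) * PI^7 + (-427117/10569646080) * PI^9 + (1176373/3805072588800) * PI^11 + (-2680669/2009078326886400) * PI^13 + (2411/669692775628800) * PI^15 + (-1/148820616806400) * PI^17 ].

Lemma Q_up_taylor_gap_near_pi2 (x : R) :
  Q_up x * (1 - cos_taylor12 (PI - 2 * x))
    - (PI ^ 2 - 4 * x ^ 2) ^ 2 * (2 * x - sin_taylor11 (PI - 2 * x))
  = (PI - 2 * x) ^ 2 * (2 * (PI - 2 * x) / PI) ^ 3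
      * bernstein Q_up_gap_coeffs_near_pi2 (2 * (PI - 2 * x) / PI).
Proof.
  unfold Q_up, sin_taylor11, cos_taylor12, Q_up_gap_coeffs_near_pi2.
  cbn [bernstein length]; field; exact PI_neq0.
Qed.

Lemma P_low_bound_near_0 (x : R) : 0 < x <= PI / 4 ->
  P_low x * (1 + cos (2 * x)) < (PI ^ 2 - 4 * x ^ 2) ^ 2 * (2 * x - sin (2 * x)).
Proof.
  intros Hx; pose proof PI_RGT_0.
  apply (Rmult_lt_compat_bounds _ _ _ (1 + cos_taylor12 (2 * x)) _
           (2 * x - sin_taylor13 (2 * x))).
  - apply P_low_nonneg; lra.
  - apply pow2_ge_0.
  - pose proof (cos_le_taylor12 (2 * x)); lra.
  - pose proof (sin_le_taylor13 (2 * x)); lra.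
  - apply Rlt_0_minus; rewrite P_low_taylor_gap_near_0.
    assert (Ht : 0 < 4 * x / PI <= 1) by (apply Rdiv_in_unit_interval; lra).
    apply Rmult_lt_0_compat; [apply pow_lt; lra|bernstein_certificate; exact Ht].
Qed.

Lemma Q_up_bound_near_0 (x : R) : 0 < x <= PI / 4 ->
  (PI ^ 2 - 4 * x ^ 2) ^ 2 * (2 * x - sin (2 * x)) < Q_up x * (1 + cos (2 * x)).
Proof.
  intros Hx; pose proof PI_RGT_0.
  apply (Rmult_lt_compat_bounds _ _ _ (2 * x - sin_taylor11 (2 * x)) _
           (1 + cos_taylor10 (2 * x))).
  - apply pow2_ge_0.
  - apply Q_up_nonneg; lra.
  - pose proof (sin_ge_taylor11 (2 * x)); lra.
  - pose proof (cos_ge_taylor10 (2 * x)); lra.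
  - apply Rlt_0_minus; rewrite Q_up_taylor_gap_near_0.
    assert (Ht : 0 < 4 * x / PI <= 1) by (apply Rdiv_in_unit_interval; lra).
    apply Rmult_lt_0_compat; [apply pow_lt; lra|bernstein_certificate; exact Ht].
Qed.

Lemma P_low_bound_near_pi2 (x : R) : PI / 4 <= x < PI / 2 ->
  P_low x * (1 + cos (2 * x)) < (PI ^ 2 - 4 * x ^ 2) ^ 2 * (2 * x - sin (2 * x)).
Proof.
  intros Hx; pose proof PI_RGT_0.
  assert (Hsin : sin (2 * x) = sin (PI - 2 * x)) by (symmetry; apply sin_PI_x).
  assert (Hcos : cos (2 * x) = - cos (PI - 2 * x)) by (rewrite cos_pi_minus; ring).
  rewrite Hsin, Hcos.
  apply (Rmult_lt_compat_bounds _ _ _ (1 - cos_taylor10 (PI - 2 * x)) _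
           (2 * x - sin_taylor13 (PI - 2 * x))).
  - apply P_low_nonneg; lra.
  - apply pow2_ge_0.
  - pose proof (cos_ge_taylor10 (PI - 2 * x)); lra.
  - pose proof (sin_le_taylor13 (PI - 2 * x)); lra.
  - apply Rlt_0_minus; rewrite P_low_taylor_gap_near_pi2.
    assert (Ht : 0 < 2 * (PI - 2 * x) / PI <= 1) by (apply Rdiv_in_unit_interval; lra).
    apply Rmult_lt_0_compat; [apply Rmult_lt_0_compat; apply pow_lt; lra|].
    bernstein_certificate; exact Ht.
Qed.

Lemma Q_up_bound_near_pi2 (x : R) : PI / 4 <= x < PI / 2 ->
  (PI ^ 2 - 4 * x ^ 2) ^ 2 * (2 * x - sin (2 * x)) < Q_up x * (1 + cos (2 * x)).
Proof.
  intros Hx; pose proof PI_RGT_0.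
  assert (Hsin : sin (2 * x) = sin (PI - 2 * x)) by (symmetry; apply sin_PI_x).
  assert (Hcos : cos (2 * x) = - cos (PI - 2 * x)) by (rewrite cos_pi_minus; ring).
  rewrite Hsin, Hcos.
  apply (Rmult_lt_compat_bounds _ _ _ (2 * x - sin_taylor11 (PI - 2 * x)) _
           (1 - cos_taylor12 (PI - 2 * x))).
  - apply pow2_ge_0.
  - apply Q_up_nonneg; lra.
  - pose proof (sin_ge_taylor11 (PI - 2 * x)); lra.
  - pose proof (cos_le_taylor12 (PI - 2 * x)); lra.
  - apply Rlt_0_minus; rewrite Q_up_taylor_gap_near_pi2.
    assert (Ht : 0 < 2 * (PI - 2 * x) / PI <= 1) by (apply Rdiv_in_unit_interval; lra).
    apply Rmult_lt_0_compat; [apply Rmult_lt_0_compat; apply pow_lt; lra|].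
    bernstein_certificate; exact Ht.
Qed.

Lemma P_low_bound (x : R) : 0 < x < PI / 2 ->
  P_low x * (1 + cos (2 * x)) < (PI ^ 2 - 4 * x ^ 2) ^ 2 * (2 * x - sin (2 * x)).
Proof.
  intros Hx; destruct (Rle_or_lt x (PI / 4));
    [apply P_low_bound_near_0 | apply P_low_bound_near_pi2]; lra.
Qed.

Lemma Q_up_bound (x : R) : 0 < x < PI / 2 ->
  (PI ^ 2 - 4 * x ^ 2) ^ 2 * (2 * x - sin (2 * x)) < Q_up x * (1 + cos (2 * x)).
Proof.
  intros Hx; destruct (Rle_or_lt x (PI / 4));
    [apply Q_up_bound_near_0 | apply Q_up_bound_near_pi2]; lra.
Qed.

Lemma sec2_sub_tan (x : R) : 0 < cos x ->
  x * sec2 x - tan x = (2 * x - sin (2 * x)) / (1 + cos (2 * x)).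
Proof.
  intros Hc; unfold sec2, tan; rewrite sin_2a, cos_2a_cos.
  field; split; [intro; nra | lra].
Qed.

Theorem mainTheorem19 (x : R) (hx0 : 0 < x) (hx1 : x < PI / 2) :
  P_low x / (PI ^ 2 - 4 * x ^ 2) ^ 2 < x * sec2 x - tan x /\
  x * sec2 x - tan x < Q_up x / (PI ^ 2 - 4 * x ^ 2) ^ 2.
Proof.
  pose proof PI_RGT_0.
  assert (Hcos : 0 < cos x) by (apply cos_gt_0; lra).
  assert (HD : 0 < (PI ^ 2 - 4 * x ^ 2) ^ 2) by (apply pow_lt; nra).
  assert (HC : 0 < 1 + cos (2 * x)) by (rewrite cos_2a_cos; nra).
  pose proof (P_low_bound x (conj hx0 hx1)).
  pose proof (Q_up_bound x (conj hx0 hx1)).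
  rewrite sec2_sub_tan by exact Hcos.
  split; apply Rdiv_lt_Rdiv; lra.
Qed.
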